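(* The topology of any first countable topological semigroup $S$ with an open right unit is generated by a single left-subinvariant $\overline{\mathsf{dist}}$-continuous quasi-pseudometric; if moreover $S$ is semiregular, this quasi-pseudometric can additionally be chosen right-continuous.
   Context: A topological semigroup is a topological space with continuous associative multiplication; $e$ is an open right unit if $xe=x$ for all $x$ and $xV$ is a neighborhood of $x$ for every neighborhood $V$ of $e$ and every $x$. Semiregular: every neighborhood $O_x$ of $x$ contains $\mathrm{int}\,\overline{U_x}$ for some neighborhood $U_x$ of $x$. A quasi-pseudometric is $d:S\times S\to[0,\infty)$ with $d(x,x)=0$ and the triangle inequality; left-subinvariant if $d(zx,zy)\le d(x,y)$ for all $x,y,z$; right-continuous if $y\mapsto d(x,y)$ is continuous for each $x$; $\overline{\mathsf{dist}}$-continuous if for every non-empty $A\subset S$ the function $x\mapsto\inf\{\varepsilon>0:x\in\overline{B_d(A,\varepsilon)}\}$ is continuous, where $B_d(A,\varepsilon)=\{y:\exists a\in A\ d(a,y)<\varepsilon\}$. $d$ generates the topology if the balls $B_d(x,\varepsilon)=\{y:d(x,y)<\varepsilon\}$ form a subbase of it. *)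

From HB Require Import structures.
From mathcomp Require Import all_boot all_order all_algebra.
From mathcomp Require Import all_classical all_reals all_analysis.
Set Implicit Arguments. Unset Strict Implicit. Unset Printing Implicit Defensive.
Import Order.TTheory GRing.Theory Num.Theory.
Import numFieldNormedType.Exports.
Local Open Scope classical_set_scope.
Local Open Scope ring_scope.

Section Defs.
Variable S : topologicalType.

Definition topological_semigroup (mul : S -> S -> S) : Prop :=
  (forall x y z, mul x (mul y z) = mul (mul x y) z) /\
  continuous (fun p : S * S => mul p.1 p.2).

Definition first_countable : Prop :=
  forall x : S, exists B : nat -> set S,
    (forall n, nbhs x (B n)) /\ (forall U, nbhs x U -> exists n, B n `<=` U).

Definition open_right_unit (mul : S -> S -> S) (e : S) : Prop :=
  (forall x, mul x e = x) /\
  (forall x (V : set S), nbhs e V -> nbhs x [set mul x v | v in V]).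

Definition semiregular : Prop :=
  forall (x : S) (O : set S), nbhs x O ->
    exists U : set S, nbhs x U /\ interior (closure U) `<=` O.

Variable R : realType.

Definition quasi_pseudometric (d : S -> S -> R) : Prop :=
  (forall x y, 0 <= d x y) /\ (forall x, d x x = 0) /\
  (forall x y z, d x z <= d x y + d y z).

Definition left_subinvariant (mul : S -> S -> S) (d : S -> S -> R) : Prop :=
  forall x y z, d (mul z x) (mul z y) <= d x y.

Definition qright_continuous (d : S -> S -> R) : Prop :=
  forall x, continuous (d x).

Definition qball (d : S -> S -> R) (x : S) (eps : R) : set S :=
  [set y | d x y < eps].

Definition qball_set (d : S -> S -> R) (A : set S) (eps : R) : set S :=
  [set y | exists2 a, A a & d a y < eps].

Definition distbar (d : S -> S -> R) (A : set S) (x : S) : R :=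
  inf [set eps : R | 0 < eps /\ closure (qball_set d A eps) x].

Definition distbar_continuous (d : S -> S -> R) : Prop :=
  forall A : set S, A !=set0 -> continuous (distbar d A).

(* the balls B_d(x, eps) form a subbase of the topology of S:
   a set is open iff it is a union of finite intersections of balls *)
Definition generates_topology (d : S -> S -> R) : Prop :=
  forall U : set S, open U <->
    (forall x, U x -> exists (n : nat) (c : 'I_n -> S) (r : 'I_n -> R),
       (forall i, qball d (c i) (r i) x) /\
       (forall y, (forall i, qball d (c i) (r i) y) -> U y)).

End Defs.

From HB Require Import structures.
From mathcomp Require Import all_boot all_order all_algebra.
From mathcomp Require Import all_classical all_reals all_analysis.
From mathcomp Require Import ring lra.
Import Order.TTheory GRing.Theory Num.Theory.
Import numFieldNormedType.Exports.
Local Open Scope classical_set_scope.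
Local Open Scope ring_scope.

Set Implicit Arguments.
Unset Strict Implicit.
Unset Printing Implicit Defensive.

(* From a countable base at e and the continuity of the multiplication one
   gets neighbourhoods V_n of e forming a base at e with V_(n+1)^3 <= V_n.  As
   in the Birkhoff-Kakutani theorem, let d(x, y) be the infimum of the weights
   of chains from x to y whose steps are right translations by elements of V_n,
   of weight 2^-n.  Then d is a left-subinvariant quasi-pseudometric, and the
   halving argument shows that d(x, y) < 2^-n forces y in x V_n, so the d-balls
   centred at x form a base at x.  Right translations by elements close to e
   move every point by little, uniformly; since e is an open right unit, this
   makes the balls open and all the functions dist-bar continuous.  In the
   semiregular case d is replaced by d'(x, y) = dist-bar_d({x})(y), which is
   right-continuous by the first part; semiregularity keeps d'-balls a base. *)

Definition qball_nbhs_base (R : realType) (S : topologicalType) (D : S -> S -> R) :=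
  forall x U, nbhs x U -> exists2 r, 0 < r & qball D x r `<=` U.

Definition distbar1 (R : realType) (S : topologicalType) (D : S -> S -> R) x y :=
  distbar D [set x] y.

Section Distbar.
Variables (R : realType) (S : topologicalType) (D : S -> S -> R).

Lemma generates_topology_qball : (forall x, D x x = 0) ->
  (forall c r, open (qball D c r)) -> qball_nbhs_base D -> generates_topology D.
Proof.
move=> Dxx qball_open base U; split.
- rewrite openE => oU x Ux.
  have [r r0 rU] := base x U (oU x Ux).
  exists 1%N, (fun=> x), (fun=> r); split; first by move=> _; rewrite /qball /= Dxx.
  by move=> y /(_ ord0); exact: rU.
- move=> cover; rewrite openE => x Ux.
  have [n [c [r [xc cU]]]] := cover x Ux.
  have : \forall y \near x, forall i, qball D (c i) (r i) y.
    by apply: filter_forall => i; move: (qball_open (c i) (r i)); rewrite openE; apply.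
  by apply: filterS => y; exact: cU.
Qed.

Hypothesis D_ge0 : forall x y, 0 <= D x y.

Lemma qball_setS (A : set S) r s : r <= s -> qball_set D A r `<=` qball_set D A s.
Proof. by move=> rs z [a Aa az]; exists a => //; exact: lt_le_trans rs. Qed.

Let radii A t := [set eps : R | 0 < eps /\ closure (qball_set D A eps) t].

Let radii_lbound A t : has_lbound (radii A t).
Proof. by exists 0 => r [r0 _]; exact: ltW. Qed.

Let radii_neq0 A t : A !=set0 -> radii A t !=set0.
Proof.
case=> a Aa; exists (D a t + 1); split; first by have := D_ge0 a t; lra.
by apply: subset_closure; exists a => //; rewrite ltrDl.
Qed.

Lemma distbar_le A t eps : 0 < eps -> closure (qball_set D A eps) t -> distbar D A t <= eps.
Proof. by move=> eps0 cl; apply: ge_inf (radii_lbound A t) _ _. Qed.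

Lemma distbar_ge A t c : A !=set0 ->
  (forall eps, 0 < eps -> closure (qball_set D A eps) t -> c <= eps) -> c <= distbar D A t.
Proof. by move=> A0 lb; apply: lb_le_inf (radii_neq0 t A0) _ => r []; exact: lb. Qed.

Lemma distbar_ge0 A t : A !=set0 -> 0 <= distbar D A t.
Proof. by move=> A0; apply: distbar_ge => // eps /ltW. Qed.

Lemma distbar_lt A t c : A !=set0 -> distbar D A t < c ->
  exists2 eps, 0 < eps /\ closure (qball_set D A eps) t & eps < c.
Proof. by move=> A0 /(inf_lt (radii_neq0 t A0)) [r]; exists r. Qed.

Lemma distbar_le_dist A a t : A a -> distbar D A t <= D a t.
Proof.
move=> Aa; apply/ler_addgt0Pr => eps eps0.
apply: distbar_le; first by have := D_ge0 a t; lra.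
by apply: subset_closure; exists a => //; rewrite ltrDl.
Qed.

Lemma near_distbar_gt A x eps : A !=set0 -> 0 < eps ->
  \forall t \near x, distbar D A x - eps < distbar D A t.
Proof.
move=> A0 eps0; set f := distbar D A.
have [le0|gt0] := leP (f x - eps / 2) 0.
  by apply: nearW => t; have := distbar_ge0 t A0; rewrite -/f; lra.
have : ~ closure (qball_set D A (f x - eps / 2)) x.
  by move=> /(distbar_le gt0); rewrite -/f; lra.
rewrite /closure /= => /existsNP [N] /not_implyP [Nx NA].
apply: filterS (nbhs_interior Nx) => t Nt.
apply: (@lt_le_trans _ _ (f x - eps / 2)); first lra.
apply: distbar_ge => // r r0 /(_ N Nt) [z [Az Nz]].
rewrite leNgt; apply/negP => rlt; apply: NA; exists z; split => //.
by apply: qball_setS Az; exact: ltW.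
Qed.

Lemma distbar1_le x y : distbar1 D x y <= D x y.
Proof. exact: distbar_le_dist. Qed.

Lemma distbar1_ge0 x y : 0 <= distbar1 D x y.
Proof. by apply: distbar_ge0; exists x. Qed.

Lemma distbar1_xx x : D x x = 0 -> distbar1 D x x = 0.
Proof. by move=> Dxx; apply/eqP; rewrite eq_le distbar1_ge0 -Dxx distbar1_le. Qed.

(* The second hypothesis says that a D-short path from y into a neighbourhood
   of w can be started from any point close to y. *)
Lemma distbar1_qpm : quasi_pseudometric D ->
  (forall y w r N, D y w < r -> nbhs w N ->
     \forall y' \near y, exists2 w', N w' & D y' w' < r) ->
  quasi_pseudometric (distbar1 D).
Proof.
move=> [_ [D_xx D_tri]] D_near; split; first exact: distbar1_ge0.
split=> [x|x y z]; first exact: distbar1_xx.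
apply/ler_addgt0Pr => eps eps0.
have [a [a0 ya] alt] : exists2 a, 0 < a /\ closure (qball_set D [set x] a) y &
    a < distbar1 D x y + eps / 2 by apply: distbar_lt; [exists x | rewrite ltrDl; lra].
have [b [b0 zb] blt] : exists2 b, 0 < b /\ closure (qball_set D [set y] b) z &
    b < distbar1 D y z + eps / 2 by apply: distbar_lt; [exists y | rewrite ltrDl; lra].
apply: (@le_trans _ _ (a + b)); last lra.
apply: distbar_le; first lra.
move=> N /nbhs_interior /zb [w [[_ -> yw] Nw]].
have [y' [[_ -> xy'] [w' Nw' y'w']]] := ya _ (D_near _ _ _ _ yw Nw).
exists w'; split => //; exists x => //.
by apply: le_lt_trans (D_tri x y' w') _; lra.
Qed.

Lemma distbar1_nbhs_base : semiregular S -> qball_nbhs_base D ->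
  (forall c r, open (qball (distbar1 D) c r)) -> qball_nbhs_base (distbar1 D).
Proof.
move=> semireg base qball1_open x U xU.
have [W [xW WU]] := semireg x U xU.
have [r r0 rW] := base x W xW.
exists r => // y xy; apply: WU; move: (qball1_open x r); rewrite openE => /(_ y xy).
apply: filterS => y' /distbar_lt [|eps [_ cl] epsr]; first by exists x.
by apply: closureS cl => v [_ -> xv]; apply: rW; exact: lt_trans epsr.
Qed.

End Distbar.

Section ExpTwo.
Variable R : realType.

Lemma exp2N_gt0 n : 0 < 2 ^- n :> R.
Proof. by rewrite invr_gt0 exprn_gt0. Qed.

Lemma exp2N_le1 n : 2 ^- n <= 1 :> R.
Proof. by rewrite invf_le1 ?exprn_gt0 // exprn_ege1 // ler1n. Qed.

Lemma exp2NS n : 2 ^- n.+1 + 2 ^- n.+1 = 2 ^- n :> R.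
Proof. by rewrite exprS; field; rewrite expf_neq0 // pnatr_eq0. Qed.

Lemma exp2N_ltn m n : 2 ^- m < 2 ^- n :> R -> (n < m)%N.
Proof. by rewrite ltf_pV2 ?posrE ?exprn_gt0 // ltr_eXn2l // ltr1n. Qed.

Lemma exp2N_lt (eps : R) : 0 < eps -> exists n, 2 ^- n < eps.
Proof.
move=> eps0; have [N _ /(_ N (leqnn N))] := near_infty_natSinv_expn_lt (PosNum eps0).
by rewrite div1r; exists N.
Qed.

End ExpTwo.

Lemma sum_split_lt (R : realDomainType) (T : Type) (f : T -> R) (t1 t2 : R) (L : seq T) :
  0 < t1 -> 0 < t2 -> (0 < size L)%N -> \sum_(s <- L) f s < t1 + t2 ->
  exists L1 s L2, [/\ L = L1 ++ s :: L2, \sum_(x <- L1) f x < t1 & \sum_(x <- L2) f x < t2].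
Proof.
move=> + t20; elim: L t1 => [//|a L IH] t1 t10 _; rewrite big_cons => aL.
have [Lt2|t2L] := ltP (\sum_(x <- L) f x) t2; first by exists [::], a, L; rewrite big_nil.
have L0 : (0 < size L)%N by move: t2L; case: (L) => //; rewrite big_nil leNgt t20.
have t1a : 0 < t1 - f a by lra.
have Lt : \sum_(x <- L) f x < t1 - f a + t2 by lra.
have [L1 [s [L2 [-> L1t L2t]]]] := IH _ t1a L0 Lt.
by exists (a :: L1), s, L2; rewrite big_cons; split => //; lra.
Qed.

Section TopologicalSemigroup.
Variables (R : realType) (S : topologicalType) (mul : S -> S -> S) (e : S).
Hypothesis mul_cont : continuous (fun p : S * S => mul p.1 p.2).
Hypothesis mulx1 : forall x, mul x e = x.
Hypothesis nbhs_mulx : forall x (V : set S), nbhs e V -> nbhs x [set mul x v | v in V].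

Lemma nbhs_mul x y N : nbhs (mul x y) N ->
  exists2 P, nbhs x P & exists2 Q, nbhs y Q & forall a b, P a -> Q b -> N (mul a b).
Proof.
move=> /(@mul_cont (x, y)) [[P Q] /= [xP yQ] PQN].
by exists P => //; exists Q => // a b Pa Qb; exact: (PQN (a, b)).
Qed.

Lemma mulr_continuous u : continuous (mul^~ u).
Proof.
move=> x N /nbhs_mul [P xP [Q uQ PQN]].
by apply: filterS xP => a Pa; apply: PQN => //; exact: nbhs_singleton.
Qed.

Lemma mull_continuous z : continuous (mul z).
Proof.
move=> x N /nbhs_mul [P zP [Q xQ PQN]].
by apply: filterS xQ => b Qb; apply: PQN => //; exact: nbhs_singleton.
Qed.

Lemma nbhs_cube_root X : nbhs e X ->
  exists2 W, nbhs e W & forall a b c, W a -> W b -> W c -> X (mul a (mul b c)).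
Proof.
rewrite -{1}[e]mulx1 => /nbhs_mul [P eP [Q]]; rewrite -{1}[e]mulx1.
move=> /nbhs_mul [P' eP' [Q' eQ' P'Q'Q]] PQX.
exists (P `&` P' `&` Q'); first by apply: filterI => //; exact: filterI.
by move=> a b c [[Pa _] _] [[_ P'b] _] [_ Q'c]; apply: PQX => //; exact: P'Q'Q.
Qed.

Lemma nbhs_cube_base : first_countable S ->
  exists V : nat -> set S, [/\ forall n, nbhs e (V n),
    forall n a b c, V n.+1 a -> V n.+1 b -> V n.+1 c -> V n (mul a (mul b c)) &
    forall U, nbhs e U -> exists n, V n `<=` U].
Proof.
move=> /(_ e) [B [eB Bbase]].
have /choice [root rootP] : forall X : set S, exists W : set S, nbhs e X -> nbhs e W /\
    forall a b c, W a -> W b -> W c -> X (mul a (mul b c)).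
  move=> X; have [eX|neX] := pselect (nbhs e X); last by exists setT => /neX.
  by have [W eW WX] := nbhs_cube_root eX; exists W.
pose fix V n := if n is k.+1 then root (V k) `&` B k else setT.
have eV n : nbhs e (V n).
  by elim: n => [|n IH] /=; [exact: filterT | apply: filterI => //; case: (rootP _ IH)].
exists V; split => //.
- by move=> n a b c [Va _] [Vb _] [Vc _]; case: (rootP _ (eV n)) => _; apply.
- by move=> U /Bbase [n BU]; exists n.+1 => x [_ /BU].
Qed.

Definition small_right_translations (D : S -> S -> R) :=
  forall eps, 0 < eps -> exists2 U, nbhs e U & forall z u, U u -> D z (mul z u) < eps.

Section SmallRightTranslations.
Variable D : S -> S -> R.
Hypothesis D_qpm : quasi_pseudometric D.
Hypothesis D_small : small_right_translations D.

Let D_ge0 : forall x y, 0 <= D x y := proj1 D_qpm.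
Let D_tri : forall x y z, D x z <= D x y + D y z := proj2 (proj2 D_qpm).

Lemma open_qball c r : open (qball D c r).
Proof.
rewrite openE => y cy; rewrite /interior /=.
have [U eU small] : exists2 U, nbhs e U & forall z u, U u -> D z (mul z u) < r - D c y.
  by apply: D_small; rewrite subr_gt0.
apply: filterS (nbhs_mulx y eU) => _ [u Uu <-].
by rewrite /qball /=; have := D_tri c y (mul y u); have := small y u Uu; lra.
Qed.

Lemma near_distbar_lt A x eps : A !=set0 -> 0 < eps ->
  \forall t \near x, distbar D A t < distbar D A x + eps.
Proof.
move=> A0 eps0; set f := distbar D A.
have [a [a0 cla] alt] : exists2 a, 0 < a /\ closure (qball_set D A a) x & a < f x + eps / 2.
  by apply: distbar_lt => //; rewrite ltrDl; lra.
have [U eU small] : exists2 U, nbhs e U & forall z u, U u -> D z (mul z u) < eps / 2.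
  by apply: D_small; lra.
apply: filterS (nbhs_mulx x eU) => _ [u Uu <-].
apply: (@le_lt_trans _ _ (a + eps / 2)); last lra.
apply: distbar_le; first lra.
move=> N /(@mulr_continuous u x) /cla [z [[b Ab bz] Nzu]].
exists (mul z u); split => //; exists b => //.
by have := D_tri b z (mul z u); have := small z u Uu; lra.
Qed.

Lemma distbar_continuous_small : distbar_continuous D.
Proof.
move=> A A0 x; apply/cvgrPdist_lt => eps eps0.
apply: filterS2 (near_distbar_lt x A0 eps0) (near_distbar_gt D_ge0 x A0 eps0) => t lt gt.
by rewrite ltr_distlC lt gt.
Qed.

Lemma generates_topology_small : qball_nbhs_base D -> generates_topology D.
Proof. exact: generates_topology_qball (proj1 (proj2 D_qpm)) open_qball. Qed.

End SmallRightTranslations.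

Lemma distbar1_small (D : S -> S -> R) : (forall x y, 0 <= D x y) ->
  small_right_translations D -> small_right_translations (distbar1 D).
Proof.
move=> D_ge0 D_small eps /D_small [U eU small]; exists U => // z u Uu.
exact: le_lt_trans (distbar1_le D_ge0 _ _) (small z u Uu).
Qed.

Lemma distbar1_left_subinvariant (D : S -> S -> R) : (forall x y, 0 <= D x y) ->
  left_subinvariant mul D -> left_subinvariant mul (distbar1 D).
Proof.
move=> D_ge0 D_left x y z; apply: distbar_ge => //; first by exists x.
move=> eps eps0 cl; apply: distbar_le => // N /(@mull_continuous z y).
move=> /cl [w [[_ -> xw] Nzw]]; exists (mul z w); split => //.
by exists (mul z x) => //; exact: le_lt_trans (D_left _ _ _) xw.
Qed.

Section ChainDistance.
Hypothesis mulA : forall x y z, mul x (mul y z) = mul (mul x y) z.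
Variable V : nat -> set S.
Hypothesis V_nbhs : forall n, nbhs e (V n).
Hypothesis V_cube : forall n a b c, V n.+1 a -> V n.+1 b -> V n.+1 c -> V n (mul a (mul b c)).

Lemma V_nonincreasing m n : (m <= n)%N -> V n `<=` V m.
Proof.
move=> /subnKC <-; elim: (n - m)%N => [|k IH] x; first by rewrite addn0.
rewrite addnS => Vx; apply: IH; rewrite -[x]mulx1 -[e]mulx1.
by apply: V_cube => //; exact: nbhs_singleton.
Qed.

(* The step [Some n] is a right translation by an element of [V n], of weight
   2^-n; the step [None] jumps anywhere at cost 1, so that any two points are
   joined by a chain. *)
Definition step_weight (s : option nat) : R := if s is Some n then 2 ^- n else 1.

Definition chain_weight (L : seq (option nat)) : R := \sum_(s <- L) step_weight s.

Definition chain_step x (s : option nat) y : Prop :=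
  if s is Some n then exists2 u, V n u & y = mul x u else True.

Fixpoint chain x (L : seq (option nat)) y : Prop :=
  if L is s :: L' then exists2 z, chain_step x s z & chain z L' y else y = x.

Lemma chain_weight_ge0 L : 0 <= chain_weight L.
Proof. by apply: sumr_ge0 => -[n|] _ //=; exact/ltW/exp2N_gt0. Qed.

Lemma chain_catP x z L1 L2 :
  chain x (L1 ++ L2) z <-> exists2 y, chain x L1 y & chain y L2 z.
Proof.
elim: L1 x => [|s L1 IH] x /=; first by split=> [|[_ -> //]]; exists x.
split=> [[y xy /IH [w yw wz]]|[w [y xy yw] wz]]; first by exists w => //; exists y.
by exists y => //; apply/IH; exists w.
Qed.

Lemma chain_mull z x y L : chain x L y -> chain (mul z x) L (mul z y).
Proof.
elim: L x => [|s L IH] x /=; first by move=> ->.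
case=> x' xx' x'y; exists (mul z x'); last exact: IH.
by case: s xx' => [n [u Vu ->]|] //=; exists u; rewrite ?mulA.
Qed.

(* The halving argument of the Birkhoff-Kakutani metrization theorem: cut the
   chain at a step on both sides of which the weight is < 2^-(n+1). *)
Lemma chain_weight_lt x y L n : chain x L y -> chain_weight L < 2 ^- n ->
  exists2 v, V n v & y = mul x v.
Proof.
have [k] := ubnP (size L); elim: k => // k IH in L x y n *; rewrite ltnS => Lk.
case: L Lk => [_ /= -> _|s0 L0 Lk xy Ln].
  by exists e; [exact: nbhs_singleton | rewrite mulx1].
have L2n1 : chain_weight (s0 :: L0) < 2 ^- n.+1 + 2 ^- n.+1 by rewrite exp2NS.
have [L1 [s [L2 [Ls L1n L2n]]]] := sum_split_lt (@exp2N_gt0 R n.+1)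
  (@exp2N_gt0 R n.+1) (isT : (0 < size (s0 :: L0))%N) L2n1.
have sLn : step_weight s < 2 ^- n.
  apply: le_lt_trans Ln; rewrite Ls /chain_weight big_cat big_cons /=.
  by have := chain_weight_ge0 L1; have := chain_weight_ge0 L2; rewrite /chain_weight; lra.
have size_lt (L' : seq (option nat)) :
    (size L' <= size L1 + size L2)%N -> (size L' < k)%N.
  by move/leq_ltn_trans; apply; move: Lk; rewrite Ls size_cat /= addnS.
move: xy; rewrite Ls => /chain_catP [y1 xy1 [y2 + y2y]].
have [v1 Vv1 ->] := IH _ _ _ _ (size_lt _ (leq_addr _ _)) xy1 L1n.
have [v2 Vv2 ->] := IH _ _ _ _ (size_lt _ (leq_addl _ _)) y2y L2n.
case: s sLn {Ls} => [m /= mn [u Vu ->]|/=]; last by rewrite ltNge exp2N_le1.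
exists (mul v1 (mul u v2)); last by rewrite !mulA.
by apply: V_cube => //; exact: V_nonincreasing (exp2N_ltn mn) _ Vu.
Qed.

Lemma near_chain y L w N : chain y L w -> nbhs w N ->
  \forall y' \near y, exists2 w', N w' & chain y' L w'.
Proof.
elim: L y => [|s L IH] y /=; first by move=> -> Ny; apply: filterS Ny => y' Ny'; exists y'.
case=> z yz zw Nw; case: s yz => [n [u Vu yuz]|_].
  move: (IH z zw Nw); rewrite yuz => /(@mulr_continuous u y) near_yu.
  apply: filterS (near_yu : nbhs y _) => y' [w' Nw' y'w'].
  by exists w' => //; exists (mul y' u) => //; exists u.
by apply: nearW => y'; exists w; [exact: nbhs_singleton | exists z].
Qed.

Definition chain_dist x y : R := inf [set chain_weight L | L in [set L | chain x L y]].

Let chain_weights_neq0 x y : [set chain_weight L | L in [set L | chain x L y]] !=set0.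
Proof. by exists 1, [:: None]; [exists y | rewrite /chain_weight big_seq1]. Qed.

Lemma chain_dist_le x y L : chain x L y -> chain_dist x y <= chain_weight L.
Proof.
move=> xy; apply: ge_inf; last by exists L.
by exists 0 => _ [L' _ <-]; exact: chain_weight_ge0.
Qed.

Lemma chain_dist_lt x y t : chain_dist x y < t -> exists2 L, chain x L y & chain_weight L < t.
Proof. by move=> /(inf_lt (chain_weights_neq0 x y)) [_ [L xy <-]]; exists L. Qed.

Lemma chain_dist_ge0 x y : 0 <= chain_dist x y.
Proof.
by apply: lb_le_inf (chain_weights_neq0 x y) _ => _ [L _ <-]; exact: chain_weight_ge0.
Qed.

Lemma chain_dist_triangle x y z : chain_dist x z <= chain_dist x y + chain_dist y z.
Proof.
apply/ler_addgt0Pr => eps eps0.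
have [L1 xy L1lt] : exists2 L, chain x L y & chain_weight L < chain_dist x y + eps / 2.
  by apply: chain_dist_lt; rewrite ltrDl; lra.
have [L2 yz L2lt] : exists2 L, chain y L z & chain_weight L < chain_dist y z + eps / 2.
  by apply: chain_dist_lt; rewrite ltrDl; lra.
have xz : chain x (L1 ++ L2) z by apply/chain_catP; exists y.
apply: le_trans (chain_dist_le xz) _; rewrite /chain_weight big_cat /=.
by move: L1lt L2lt; rewrite /chain_weight; lra.
Qed.

Lemma chain_dist_qpm : quasi_pseudometric chain_dist.
Proof.
split; first exact: chain_dist_ge0.
split; last exact: chain_dist_triangle.
move=> x; apply/eqP; rewrite eq_le chain_dist_ge0 andbT.
by have := @chain_dist_le x x [::] erefl; rewrite /chain_weight big_nil.
Qed.

Lemma chain_dist_left_subinvariant : left_subinvariant mul chain_dist.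
Proof.
move=> x y z; apply: lb_le_inf (chain_weights_neq0 x y) _ => _ [L xy <-].
exact/chain_dist_le/chain_mull.
Qed.

Lemma chain_dist_small : small_right_translations chain_dist.
Proof.
move=> eps /exp2N_lt [n neps]; exists (V n) => // z u Vu.
have zu : chain z [:: Some n] (mul z u) by exists (mul z u) => //; exists u.
apply: le_lt_trans neps; apply: le_trans (chain_dist_le zu) _.
by rewrite /chain_weight big_seq1.
Qed.

Lemma chain_dist_lt_exp2N x y n : chain_dist x y < 2 ^- n -> exists2 v, V n v & y = mul x v.
Proof. by move=> /chain_dist_lt [L xy Ln]; exact: chain_weight_lt xy Ln. Qed.

Lemma near_chain_dist y w r N : chain_dist y w < r -> nbhs w N ->
  \forall y' \near y, exists2 w', N w' & chain_dist y' w' < r.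
Proof.
move=> /chain_dist_lt [L yw Lr] /(near_chain yw); apply: filterS => y' [w' Nw' y'w'].
by exists w' => //; exact: le_lt_trans (chain_dist_le y'w') Lr.
Qed.

Lemma chain_dist_nbhs_base : (forall U, nbhs e U -> exists n, V n `<=` U) ->
  qball_nbhs_base chain_dist.
Proof.
move=> V_base x U; rewrite -{1}[x]mulx1 => /(@mull_continuous x e) /V_base [n VU].
by exists (2 ^- n); [exact: exp2N_gt0 | move=> y /chain_dist_lt_exp2N [v /VU Uxv ->]].
Qed.

End ChainDistance.

End TopologicalSemigroup.

Theorem corollary6p3 (R : realType) (S : topologicalType) (mul : S -> S -> S) (e : S) :
  topological_semigroup mul -> first_countable S -> open_right_unit mul e ->
  (exists d : S -> S -> R,
     [/\ quasi_pseudometric d, left_subinvariant mul d,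
         distbar_continuous d & generates_topology d]) /\
  (semiregular S ->
   exists d : S -> S -> R,
     [/\ quasi_pseudometric d, left_subinvariant mul d,
         distbar_continuous d, generates_topology d & qright_continuous d]).
Proof.
move=> [mulA mul_cont] first_count [mulx1 nbhs_mulx].
have [V [V_nbhs V_cube V_base]] := nbhs_cube_base mul_cont mulx1 first_count.
pose d := chain_dist R mul V.
have d_qpm : quasi_pseudometric d := chain_dist_qpm R mul V.
have d_ge0 : forall x y, 0 <= d x y := proj1 d_qpm.
have d_small : small_right_translations mul e d := chain_dist_small mul V_nbhs.
have d_base : qball_nbhs_base d :=
  chain_dist_nbhs_base R mul_cont mulx1 mulA V_nbhs V_cube V_base.
have d_left : left_subinvariant mul d := chain_dist_left_subinvariant R mulA V.
have d_cont := distbar_continuous_small mul_cont nbhs_mulx d_qpm d_small.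
split.
  by exists d; split => //; exact: (generates_topology_small nbhs_mulx d_qpm d_small d_base).
move=> semireg; pose d' := distbar1 d.
have d'_qpm : quasi_pseudometric d' :=
  distbar1_qpm d_ge0 d_qpm (near_chain_dist (V := V) mul_cont).
have d'_small : small_right_translations mul e d' := distbar1_small d_ge0 d_small.
have d'_base : qball_nbhs_base d' :=
  distbar1_nbhs_base d_ge0 semireg d_base (open_qball nbhs_mulx d'_qpm d'_small).
exists d'; split => //.
- exact: (distbar1_left_subinvariant mul_cont d_ge0 d_left).
- exact: (distbar_continuous_small mul_cont nbhs_mulx d'_qpm d'_small).
- exact: (generates_topology_small nbhs_mulx d'_qpm d'_small d'_base).
- by move=> x; apply: (d_cont [set x]); exists x.
Qed.
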